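(* Assume the abstract framework described in the context. Let $f\in\mathcal{D}_2$. Then the element $$\mathbf{D}^{B}_\Omega f := -F|_\Omega + \big(\Pi^L(L(\mathbf{1}_\Omega F))\big)|_\Omega\in\mathcal{H}_2^\Omega$$ does not depend on the choice of $F\in\mathcal{H}_2$ with $\operatorname{Tr}_2F=f$; likewise $\mathbf{D}^{B}_{\mathcal{C}} f := -F|_{\mathcal{C}} + \big(\Pi^L(L(\mathbf{1}_{\mathcal{C}} F))\big)|_{\mathcal{C}}\in\mathcal{H}_2^{\mathcal{C}}$ does not depend on this choice. Moreover, for all $f\in\mathcal{D}_2$ and $g\in\mathcal{N}_2$, $$\|\mathbf{D}^{B}_\Omega f\|_{\mathcal{H}_2^\Omega}\le \frac{\|B^{\mathcal{C}}\|}{\lambda}\|f\|_{\mathcal{D}_2},\qquad \|\mathbf{D}^{B}_{\mathcal{C}} f\|_{\mathcal{H}_2^{\mathcal{C}}}\le \frac{\|B^{\Omega}\|}{\lambda}\|f\|_{\mathcal{D}_2},\qquad \|\mathbf{S}^L_\Omega g\|_{\mathcal{H}_2}\le \frac{1}{\lambda}\|g\|_{\mathcal{N}_2},$$ where $\|B^\Omega\|$, $\|B^{\mathcal C}\|$ denote the bounds (norms) of the bounded bilinear forms $B^\Omega$, $B^{\mathcal C}$.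
   Context: Abstract framework. Let $\mathcal{H}_1,\mathcal{H}_2$ be complex Hilbert spaces, and for $j=1,2$ let $\widehat{\mathcal{H}}_j^\Omega$, $\widehat{\mathcal{H}}_j^{\mathcal{C}}$, $\widehat{\mathcal{D}}_j$ be normed (or seminormed) vector spaces. We are given bounded linear operators $\operatorname{Tr}_j:\mathcal{H}_j\to\widehat{\mathcal{D}}_j$ and bounded linear ''restriction'' operators $F\mapsto F|_\Omega$ from $\mathcal{H}_j$ to $\widehat{\mathcal{H}}_j^\Omega$ and $F\mapsto F|_{\mathcal{C}}$ from $\mathcal{H}_j$ to $\widehat{\mathcal{H}}_j^{\mathcal{C}}$. Define $\mathcal{H}_j^\Omega=\{F|_\Omega:F\in\mathcal{H}_j\}$ with norm $\|f\|_{\mathcal{H}_j^\Omega}=\inf\{\|F\|_{\mathcal{H}_j}:F|_\Omega=f\}$, similarly $\mathcal{H}_j^{\mathcal{C}}$, and $\mathcal{D}_j=\{\operatorname{Tr}_jF:F\in\mathcal{H}_j\}$ with norm $\|f\|_{\mathcal{D}_j}=\inf\{\|F\|_{\mathcal{H}_j}:\operatorname{Tr}_jF=f\}$ (each modulo elements of norm zero). Let $\mathcal{N}_2=\mathcal{D}_1^*$ and $\mathcal{N}_1=\mathcal{D}_2^*$ be the dual spaces, $\langle\cdot,\cdot\rangle$ denoting duality pairings. We are given bounded bilinear forms $B:\mathcal{H}_1\times\mathcal{H}_2\to\mathbb{C}$, $B^\Omega:\mathcal{H}_1^\Omega\times\mathcal{H}_2^\Omega\to\mathbb{C}$, $B^{\mathcal{C}}:\mathcal{H}_1^{\mathcal{C}}\times\mathcal{H}_2^{\mathcal{C}}\to\mathbb{C}$,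 and there is $\lambda>0$ such that for all $u\in\mathcal{H}_1$, $v\in\mathcal{H}_2$, and all $\varphi,\psi\in\mathcal{H}_j$ ($j\in\{1,2\}$): (i) $\sup_{w\in\mathcal{H}_1\setminus\{0\}}|B(w,v)|/\|w\|_{\mathcal{H}_1}\ge\lambda\|v\|_{\mathcal{H}_2}$ and $\sup_{w\in\mathcal{H}_2\setminus\{0\}}|B(u,w)|/\|w\|_{\mathcal{H}_2}\ge\lambda\|u\|_{\mathcal{H}_1}$; (ii) $B(u,v)=B^\Omega(u|_\Omega,v|_\Omega)+B^{\mathcal{C}}(u|_{\mathcal{C}},v|_{\mathcal{C}})$; (iii) if $\operatorname{Tr}_j\varphi=\operatorname{Tr}_j\psi$ then there is $w\in\mathcal{H}_j$ with $w|_\Omega=\varphi|_\Omega$, $w|_{\mathcal{C}}=\psi|_{\mathcal{C}}$ and $\operatorname{Tr}_jw=\operatorname{Tr}_j\varphi$. Definitions: for $u\in\mathcal{H}_2$, $Lu\in\mathcal{H}_1^*$ is given by $\langle\varphi,Lu\rangle=B(\varphi,u)$. For $u\in\mathcal{H}_2^\Omega$, $L(u\mathbf{1}_\Omega)\in\mathcal{H}_1^*$ is given by $\langle\varphi,L(u\mathbf{1}_\Omega)\rangle=B^\Omega(\varphi|_\Omega,u)$ for all $\varphi\in\mathcal{H}_1$; for $F\in\mathcal H_2$, $L(\mathbf 1_\Omega F)$ means $L(F|_\Omega\mathbf 1_\Omega)$; analogously $L(u\mathbf{1}_{\mathcal{C}})$ with $B^{\mathcal{C}}$. Newton potential: for $H\in\mathcal{H}_1^*$,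 $\Pi^LH$ is the unique element of $\mathcal{H}_2$ with $B(\varphi,\Pi^LH)=\langle\varphi,H\rangle$ for all $\varphi\in\mathcal{H}_1$ (it exists uniquely by the Babuška–Lax–Milgram theorem). Single layer potential: for $g\in\mathcal{N}_2$, $\mathbf{S}^L_\Omega g$ is the unique element of $\mathcal{H}_2$ with $B(\varphi,\mathbf{S}^L_\Omega g)=\langle\operatorname{Tr}_1\varphi,g\rangle$ for all $\varphi\in\mathcal{H}_1$. *)

From Stdlib Require Import Reals.
From Coquelicot Require Import Coquelicot.
Open Scope R_scope.

Definition is_hilbert (H : CompleteNormedModule C_AbsRing) : Prop :=
  exists ip : H -> H -> C,
    (forall x y z : H, ip (plus x y) z = (ip x z + ip y z)%C) /\
    (forall (a : C) (x y : H), ip (scal a x) y = (a * ip x y)%C) /\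
    (forall x y : H, ip y x = Cconj (ip x y)) /\
    (forall x : H, ip x x = RtoC (norm x ^ 2)).

Definition is_seminorm (V : ModuleSpace C_Ring) (n : V -> R) : Prop :=
  (forall x y : V, n (plus x y) <= n x + n y) /\
  (forall (a : C) (x : V), n (scal a x) = Cmod a * n x).

Definition bounded_linear (H : CompleteNormedModule C_AbsRing)
  (V : ModuleSpace C_Ring) (n : V -> R) (T : H -> V) : Prop :=
  (forall x y : H, T (plus x y) = plus (T x) (T y)) /\
  (forall (a : C) (x : H), T (scal a x) = scal a (T x)) /\
  (exists M : R, forall x : H, n (T x) <= M * norm x).

Definition qnorm {H : CompleteNormedModule C_AbsRing} {V : Type}
  (T : H -> V) (x : V) : R :=
  real (Glb_Rbar (fun t => exists F : H, T F = x /\ t = norm F)).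

Definition bounded_bilinear (H1 H2 : CompleteNormedModule C_AbsRing)
  (B : H1 -> H2 -> C) : Prop :=
  (forall (a : C) (x y : H1) (v : H2),
      B (plus (scal a x) y) v = (a * B x v + B y v)%C) /\
  (forall (a : C) (u : H1) (x y : H2),
      B u (plus (scal a x) y) = (a * B u x + B u y)%C) /\
  (exists M : R, forall u v, Cmod (B u v) <= M * norm u * norm v).

(* A bilinear form b on the image spaces H1^X = r1(H1), H2^X = r2(H2)
   (equipped with their quotient norms), bounded. *)
Definition bounded_bilinear_img {H1 H2 : CompleteNormedModule C_AbsRing}
  {X1 X2 : Type} (r1 : H1 -> X1) (r2 : H2 -> X2) (b : X1 -> X2 -> C) : Prop :=
  (forall (a : C) (x y : H1) (v : H2),
      b (r1 (plus (scal a x) y)) (r2 v) = (a * b (r1 x) (r2 v) + b (r1 y) (r2 v))%C) /\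
  (forall (a : C) (u : H1) (x y : H2),
      b (r1 u) (r2 (plus (scal a x) y)) = (a * b (r1 u) (r2 x) + b (r1 u) (r2 y))%C) /\
  (exists M : R, forall u v,
      Cmod (b (r1 u) (r2 v)) <= M * qnorm r1 (r1 u) * qnorm r2 (r2 v)).

Definition bform_norm {H1 H2 : CompleteNormedModule C_AbsRing}
  {X1 X2 : Type} (r1 : H1 -> X1) (r2 : H2 -> X2) (b : X1 -> X2 -> C) : R :=
  real (Glb_Rbar (fun M => 0 <= M /\ forall u v,
      Cmod (b (r1 u) (r2 v)) <= M * qnorm r1 (r1 u) * qnorm r2 (r2 v))).

Definition in_dual {H : CompleteNormedModule C_AbsRing} {D : Type}
  (Tr : H -> D) (g : D -> C) : Prop :=
  (forall (a : C) (x y : H),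
      g (Tr (plus (scal a x) y)) = (a * g (Tr x) + g (Tr y))%C) /\
  (exists M : R, forall x : H, Cmod (g (Tr x)) <= M * qnorm Tr (Tr x)).

Definition dual_norm {H : CompleteNormedModule C_AbsRing} {D : Type}
  (Tr : H -> D) (g : D -> C) : R :=
  real (Glb_Rbar (fun M => 0 <= M /\ forall x : H,
      Cmod (g (Tr x)) <= M * qnorm Tr (Tr x))).

(* L(u 1_X) in H1^*:  phi |-> b (r1 phi) u. *)
Definition L_ind {H1 : CompleteNormedModule C_AbsRing} {X1 X2 : Type}
  (b : X1 -> X2 -> C) (r1 : H1 -> X1) (u : X2) : H1 -> C :=
  fun phi => b (r1 phi) u.

(* u = Pi^L h  :  B(phi, u) = <phi, h> for all phi. *)
Definition is_newton {H1 H2 : CompleteNormedModule C_AbsRing}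
  (B : H1 -> H2 -> C) (h : H1 -> C) (u : H2) : Prop :=
  forall phi : H1, B phi u = h phi.

(* s = S^L_Omega g :  B(phi, s) = <Tr1 phi, g> for all phi. *)
Definition is_single_layer {H1 H2 : CompleteNormedModule C_AbsRing} {D1 : Type}
  (B : H1 -> H2 -> C) (Tr1 : H1 -> D1) (g : D1 -> C) (s : H2) : Prop :=
  forall phi : H1, B phi s = g (Tr1 phi).

(* -F|_X + (Pi^L(L(1_X F)))|_X, where u stands for Pi^L(L(1_X F)). *)
Definition Dlayer {H2 : CompleteNormedModule C_AbsRing} {X : ModuleSpace C_Ring}
  (r : H2 -> X) (F u : H2) : X := plus (opp (r F)) (r u).

From Stdlib Require Import Reals Lra.
From Coquelicot Require Import Coquelicot.
Open Scope R_scope.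

(* Write X for one of Omega, C and Y for the other.  Given two lifts F, F' of
   f, glue w with w|_X = F|_X and w|_Y = F'|_Y.  Then z := Pi^L(L(1_X F)) - w
   satisfies z|_X = D_X f and B(phi, z) = - B^Y(phi|_Y, F'|_Y): D_X f is the
   X-restriction of the solution of a problem that only involves F'.  By the
   inf-sup condition this solution is unique and has norm at most
   ||B^Y|| ||F'|| / lambda; taking the infimum over the lifts F' gives the
   bound.  The single layer bound is the inf-sup condition applied directly. *)

Lemma plus_minus_cancel_r {G : AbelianGroup} (x y : G) : plus (minus x y) y = x.
Proof. unfold minus. rewrite <- plus_assoc, plus_opp_l. apply plus_zero_r. Qed.

Lemma additive_minus {G1 G2 : AbelianGroup} (r : G1 -> G2)
  (r_add : forall x y, r (plus x y) = plus (r x) (r y)) (x y : G1) :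
  r (minus x y) = minus (r x) (r y).
Proof.
  apply (plus_reg_r (r y)).
  rewrite <- r_add, (plus_minus_cancel_r (G := G1)), (plus_minus_cancel_r (G := G2)).
  reflexivity.
Qed.

Lemma linear_form_minus {V : NormedModule C_AbsRing} (f : V -> C)
  (f_lin : forall (a : C) (x y : V), f (plus (scal a x) y) = (a * f x + f y)%C)
  (x y : V) : f (minus x y) = (f x - f y)%C.
Proof.
  pose proof (f_lin one (minus x y) y) as h.
  rewrite scal_one, (plus_minus_cancel_r (G := V)) in h.
  rewrite h. change (one : C) with (RtoC 1). ring.
Qed.

Lemma Glb_Rbar_real_bounds (E : R -> Prop) (c x0 : R) :
  E x0 -> (forall x, E x -> c <= x) ->
  c <= real (Glb_Rbar E) /\ forall x, E x -> real (Glb_Rbar E) <= x.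
Proof.
  intros hx0 hc.
  destruct (Glb_Rbar_correct E) as [hlb hglb].
  assert (hge : Rbar_le c (Glb_Rbar E)) by (apply hglb; intros x hx; exact (hc x hx)).
  pose proof (hlb x0 hx0) as hle.
  destruct (Glb_Rbar E) as [l | |]; simpl in hge, hle |- *; try contradiction.
  split; [exact hge |]. intros x hx. exact (hlb x hx).
Qed.

(* Where [P i = 0], the bound [a i <= 0] comes from an admissible constant,
   not from the infimum. *)
Lemma Glb_Rbar_admissible_constant (I : Type) (a P : I -> R) (E : R -> Prop) :
  (forall i, 0 <= P i) ->
  (forall M, E M <-> 0 <= M /\ forall i, a i <= M * P i) ->
  (exists M, forall i, a i <= M * P i) ->
  0 <= real (Glb_Rbar E) /\ forall i, a i <= real (Glb_Rbar E) * P i.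
Proof.
  intros hP hE [M hM].
  assert (hEM : E (Rmax M 0)).
  { apply hE. split; [apply Rmax_r |]. intros i.
    apply Rle_trans with (M * P i); [apply hM |].
    apply Rmult_le_compat_r; [apply hP | apply Rmax_l]. }
  destruct (Glb_Rbar_real_bounds E 0 _ hEM) as [hge hle].
  { intros x hx. apply hE in hx. apply hx. }
  split; [exact hge |]. intros i.
  destruct (hP i) as [hPi | hPi].
  - apply Rle_div_l; [exact hPi |].
    destruct (Glb_Rbar_real_bounds E (a i / P i) _ hEM) as [hq _]; [| exact hq].
    intros x hx. apply hE in hx. apply Rle_div_l; [exact hPi | apply hx].
  - apply hE in hEM. pose proof (proj2 hEM i) as hi.
    rewrite <- hPi in hi |- *. lra.
Qed.

Section QuotientNorm.

Context {H : CompleteNormedModule C_AbsRing} {V : Type}.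
Variable T : H -> V.

Lemma qnorm_bounds (F : H) : 0 <= qnorm T (T F) /\ qnorm T (T F) <= norm F.
Proof.
  unfold qnorm.
  destruct (Glb_Rbar_real_bounds (fun t => exists F0 : H, T F0 = T F /\ t = norm F0)
              0 (norm F)) as [hge hle].
  - exists F. split; reflexivity.
  - intros x [F0 [_ ->]]. apply norm_ge_0.
  - split; [exact hge |]. apply hle. exists F. split; reflexivity.
Qed.

Lemma qnorm_ge (F : H) (c : R) :
  (forall F', T F' = T F -> c <= norm F') -> c <= qnorm T (T F).
Proof.
  intros hc. unfold qnorm.
  apply (Glb_Rbar_real_bounds _ c (norm F)).
  - exists F. split; reflexivity.
  - intros x [F0 [e ->]]. exact (hc F0 e).
Qed.

Lemma le_scaled_qnorm (F : H) (c K : R) :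
  0 <= K -> (forall F', T F' = T F -> c <= K * norm F') -> c <= K * qnorm T (T F).
Proof.
  intros [hK | <-] hc.
  - rewrite Rmult_comm. apply Rle_div_l; [exact hK |].
    apply qnorm_ge. intros F' e. apply Rle_div_l; [exact hK |].
    rewrite Rmult_comm. exact (hc F' e).
  - pose proof (hc F eq_refl). lra.
Qed.

Lemma dual_norm_bound (g : V -> C) :
  in_dual T g ->
  0 <= dual_norm T g /\ forall x, Cmod (g (T x)) <= dual_norm T g * qnorm T (T x).
Proof.
  intros [_ hM]. unfold dual_norm.
  apply (Glb_Rbar_admissible_constant H (fun x => Cmod (g (T x))) (fun x => qnorm T (T x))).
  - intros x. apply qnorm_bounds.
  - intros M. reflexivity.
  - exact hM.
Qed.

End QuotientNorm.

Lemma bform_norm_bound {H1 H2 : CompleteNormedModule C_AbsRing} {X1 X2 : Type}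
  (r1 : H1 -> X1) (r2 : H2 -> X2) (b : X1 -> X2 -> C) :
  bounded_bilinear_img r1 r2 b ->
  0 <= bform_norm r1 r2 b /\ forall u v,
    Cmod (b (r1 u) (r2 v)) <= bform_norm r1 r2 b * qnorm r1 (r1 u) * qnorm r2 (r2 v).
Proof.
  intros [_ [_ [M hM]]]. unfold bform_norm.
  destruct (Glb_Rbar_admissible_constant (H1 * H2)
     (fun p => Cmod (b (r1 (fst p)) (r2 (snd p))))
     (fun p => qnorm r1 (r1 (fst p)) * qnorm r2 (r2 (snd p)))
     (fun M => 0 <= M /\ forall u v,
        Cmod (b (r1 u) (r2 v)) <= M * qnorm r1 (r1 u) * qnorm r2 (r2 v)))
    as [hge hle].
  - intros [u v]. apply Rmult_le_pos; apply qnorm_bounds.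
  - intros M0. split; intros [h0 h]; split; try exact h0.
    + intros [u v]. simpl. rewrite <- Rmult_assoc. apply h.
    + intros u v. rewrite Rmult_assoc. exact (h (u, v)).
  - exists M. intros [u v]. simpl. rewrite <- Rmult_assoc. apply hM.
  - split; [exact hge |]. intros u v. rewrite Rmult_assoc. exact (hle (u, v)).
Qed.

Section InfSup.

Context {H1 H2 : CompleteNormedModule C_AbsRing}.
Variables (B : H1 -> H2 -> C) (lambda : R).
Hypothesis lambda_gt0 : 0 < lambda.
Hypothesis infsup : forall v : H2,
  Rbar_le (lambda * norm v)
    (Lub_Rbar (fun t => exists w : H1, w <> zero /\ t = Cmod (B w v) / norm w)).

Lemma infsup_norm_le (z : H2) (K : R) :
  (forall phi, Cmod (B phi z) <= K * norm phi) -> norm z <= K / lambda.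
Proof.
  intros hK. apply Rle_div_r; [exact lambda_gt0 |]. rewrite Rmult_comm.
  apply (Rbar_le_trans (Finite _) _ (Finite K) (infsup z)).
  apply Lub_Rbar_correct. intros t [w [hw ->]].
  apply Rle_div_l; [exact (norm_gt_0 w hw) | exact (hK w)].
Qed.

Hypothesis B_linear_r : forall (a : C) (u : H1) (x y : H2),
  B u (plus (scal a x) y) = (a * B u x + B u y)%C.

Lemma infsup_injective (z z' : H2) : (forall phi, B phi z = B phi z') -> z = z'.
Proof.
  intros e.
  assert (hz : norm (minus z z') <= 0 / lambda).
  { apply infsup_norm_le. intros phi.
    rewrite (linear_form_minus (B phi) (fun a => B_linear_r a phi)), e.
    replace (B phi z' - B phi z')%C with (RtoC 0) by ring.
    rewrite Cmod_0. lra. }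
  assert (hz0 : minus z z' = zero).
  { apply (norm_eq_zero (V := H2)). pose proof (norm_ge_0 (minus z z')).
    unfold Rdiv in hz. rewrite Rmult_0_l in hz. lra. }
  rewrite <- (plus_minus_cancel_r (G := H2) z z'), hz0. apply plus_zero_l.
Qed.

Lemma single_layer_norm_le {D1 : Type} (Tr1 : H1 -> D1) (g : D1 -> C) (s : H2) :
  in_dual Tr1 g -> is_single_layer B Tr1 g s -> norm s <= 1 / lambda * dual_norm Tr1 g.
Proof.
  intros hg hs. destruct (dual_norm_bound Tr1 g hg) as [hN0 hN].
  replace (1 / lambda * dual_norm Tr1 g) with (dual_norm Tr1 g / lambda)
    by (field; lra).
  apply infsup_norm_le. intros phi. rewrite hs.
  apply Rle_trans with (1 := hN phi).
  apply Rmult_le_compat_l; [exact hN0 | apply qnorm_bounds].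
Qed.

End InfSup.

Section TwoPieceSplitting.

Context {H1 H2 : CompleteNormedModule C_AbsRing}.
Variables (B : H1 -> H2 -> C) (lambda : R).
Hypothesis lambda_gt0 : 0 < lambda.
Hypothesis infsup : forall v : H2,
  Rbar_le (lambda * norm v)
    (Lub_Rbar (fun t => exists w : H1, w <> zero /\ t = Cmod (B w v) / norm w)).
Hypothesis B_linear_r : forall (a : C) (u : H1) (x y : H2),
  B u (plus (scal a x) y) = (a * B u x + B u y)%C.

Context {X1 Y1 Y2 D2 : Type} {X2 : ModuleSpace C_Ring}.
Variables (rX1 : H1 -> X1) (rX2 : H2 -> X2) (rY1 : H1 -> Y1) (rY2 : H2 -> Y2).
Variables (BX : X1 -> X2 -> C) (BY : Y1 -> Y2 -> C) (Tr2 : H2 -> D2).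
Hypothesis rX2_additive : forall x y, rX2 (plus x y) = plus (rX2 x) (rX2 y).
Hypothesis B_split : forall u v, B u v = (BX (rX1 u) (rX2 v) + BY (rY1 u) (rY2 v))%C.
Hypothesis glue : forall F F', Tr2 F = Tr2 F' ->
  exists w, rX2 w = rX2 F /\ rY2 w = rY2 F'.

Lemma Dlayer_eq_restriction (F u w : H2) :
  rX2 w = rX2 F -> Dlayer rX2 F u = rX2 (minus u w).
Proof.
  intros hw. rewrite (additive_minus rX2 rX2_additive), hw.
  unfold Dlayer, minus. apply plus_comm.
Qed.

Lemma newton_minus_glued (F F' u w : H2) :
  rX2 w = rX2 F -> rY2 w = rY2 F' -> is_newton B (L_ind BX rX1 (rX2 F)) u ->
  forall phi, B phi (minus u w) = (- BY (rY1 phi) (rY2 F'))%C.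
Proof.
  intros hwX hwY hu phi.
  rewrite (linear_form_minus (B phi) (fun a => B_linear_r a phi)), hu, B_split, hwX, hwY.
  unfold L_ind. ring.
Qed.

Lemma Dlayer_lift_independent (F F' u u' : H2) :
  Tr2 F = Tr2 F' ->
  is_newton B (L_ind BX rX1 (rX2 F)) u -> is_newton B (L_ind BX rX1 (rX2 F')) u' ->
  Dlayer rX2 F u = Dlayer rX2 F' u'.
Proof.
  intros hT hu hu'. destruct (glue F F' hT) as [w [hwX hwY]].
  rewrite (Dlayer_eq_restriction F u w hwX), (Dlayer_eq_restriction F' u' F' eq_refl).
  f_equal. apply (infsup_injective B lambda lambda_gt0 infsup B_linear_r).
  intros phi. rewrite (newton_minus_glued F F' u w hwX hwY hu),
    (newton_minus_glued F' F' u' F' eq_refl eq_refl hu').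
  reflexivity.
Qed.

Lemma Dlayer_norm_le (F u : H2) :
  bounded_bilinear_img rY1 rY2 BY -> is_newton B (L_ind BX rX1 (rX2 F)) u ->
  qnorm rX2 (Dlayer rX2 F u) <= bform_norm rY1 rY2 BY / lambda * qnorm Tr2 (Tr2 F).
Proof.
  intros hBY hu. destruct (bform_norm_bound rY1 rY2 BY hBY) as [hN0 hN].
  set (N := bform_norm rY1 rY2 BY) in *.
  apply le_scaled_qnorm; [apply Rdiv_le_0_compat; lra |].
  intros F' hF'. destruct (glue F F' (eq_sym hF')) as [w [hwX hwY]].
  rewrite (Dlayer_eq_restriction F u w hwX).
  apply Rle_trans with (1 := proj2 (qnorm_bounds rX2 (minus u w))).
  replace (N / lambda * norm F') with (N * norm F' / lambda) by (field; lra).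
  apply (infsup_norm_le B lambda lambda_gt0 infsup). intros phi.
  rewrite (newton_minus_glued F F' u w hwX hwY hu), Cmod_opp.
  apply Rle_trans with (1 := hN phi F').
  destruct (qnorm_bounds rY1 phi), (qnorm_bounds rY2 F').
  replace (N * norm F' * norm phi) with (N * norm phi * norm F') by ring.
  apply Rmult_le_compat; [apply Rmult_le_pos | | apply Rmult_le_compat_l |]; lra.
Qed.

End TwoPieceSplitting.

Theorem lemma4p2
  (H1 H2 : CompleteNormedModule C_AbsRing)
  (hH1 : is_hilbert H1) (hH2 : is_hilbert H2)
  (HO1 HO2 HC1 HC2 D1h D2h : ModuleSpace C_Ring)
  (nO1 : HO1 -> R) (nO2 : HO2 -> R) (nC1 : HC1 -> R) (nC2 : HC2 -> R)
  (nD1 : D1h -> R) (nD2 : D2h -> R)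
  (snO1 : is_seminorm HO1 nO1) (snO2 : is_seminorm HO2 nO2)
  (snC1 : is_seminorm HC1 nC1) (snC2 : is_seminorm HC2 nC2)
  (snD1 : is_seminorm D1h nD1) (snD2 : is_seminorm D2h nD2)
  (Tr1 : H1 -> D1h) (Tr2 : H2 -> D2h)
  (rO1 : H1 -> HO1) (rO2 : H2 -> HO2) (rC1 : H1 -> HC1) (rC2 : H2 -> HC2)
  (hTr1 : bounded_linear H1 D1h nD1 Tr1) (hTr2 : bounded_linear H2 D2h nD2 Tr2)
  (hrO1 : bounded_linear H1 HO1 nO1 rO1) (hrO2 : bounded_linear H2 HO2 nO2 rO2)
  (hrC1 : bounded_linear H1 HC1 nC1 rC1) (hrC2 : bounded_linear H2 HC2 nC2 rC2)
  (B : H1 -> H2 -> C) (BO : HO1 -> HO2 -> C) (BC : HC1 -> HC2 -> C)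
  (hB : bounded_bilinear H1 H2 B)
  (hBO : bounded_bilinear_img rO1 rO2 BO)
  (hBC : bounded_bilinear_img rC1 rC2 BC)
  (lambda : R) (hlam : 0 < lambda)
  (infsup1 : forall v : H2,
     Rbar_le (lambda * norm v)
       (Lub_Rbar (fun t => exists w : H1, w <> zero /\ t = Cmod (B w v) / norm w)))
  (infsup2 : forall u : H1,
     Rbar_le (lambda * norm u)
       (Lub_Rbar (fun t => exists w : H2, w <> zero /\ t = Cmod (B u w) / norm w)))
  (split : forall (u : H1) (v : H2),
     B u v = (BO (rO1 u) (rO2 v) + BC (rC1 u) (rC2 v))%C)
  (glue1 : forall phi psi : H1, Tr1 phi = Tr1 psi ->
     exists w : H1, rO1 w = rO1 phi /\ rC1 w = rC1 psi /\ Tr1 w = Tr1 phi)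
  (glue2 : forall phi psi : H2, Tr2 phi = Tr2 psi ->
     exists w : H2, rO2 w = rO2 phi /\ rC2 w = rC2 psi /\ Tr2 w = Tr2 phi) :
  (* D^B_Omega f is independent of the lift F of f = Tr2 F *)
  (forall (F F' u u' : H2), Tr2 F = Tr2 F' ->
     is_newton B (L_ind BO rO1 (rO2 F)) u ->
     is_newton B (L_ind BO rO1 (rO2 F')) u' ->
     Dlayer rO2 F u = Dlayer rO2 F' u') /\
  (* D^B_C f is independent of the lift F *)
  (forall (F F' u u' : H2), Tr2 F = Tr2 F' ->
     is_newton B (L_ind BC rC1 (rC2 F)) u ->
     is_newton B (L_ind BC rC1 (rC2 F')) u' ->
     Dlayer rC2 F u = Dlayer rC2 F' u') /\
  (* ||D^B_Omega f|| <= ||B^C|| / lambda * ||f||_{D2} *)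
  (forall (F u : H2),
     is_newton B (L_ind BO rO1 (rO2 F)) u ->
     qnorm rO2 (Dlayer rO2 F u) <= bform_norm rC1 rC2 BC / lambda * qnorm Tr2 (Tr2 F)) /\
  (* ||D^B_C f|| <= ||B^Omega|| / lambda * ||f||_{D2} *)
  (forall (F u : H2),
     is_newton B (L_ind BC rC1 (rC2 F)) u ->
     qnorm rC2 (Dlayer rC2 F u) <= bform_norm rO1 rO2 BO / lambda * qnorm Tr2 (Tr2 F)) /\
  (* ||S^L_Omega g||_{H2} <= ||g||_{N2} / lambda *)
  (forall (g : D1h -> C) (s : H2), in_dual Tr1 g ->
     is_single_layer B Tr1 g s ->
     norm s <= 1 / lambda * dual_norm Tr1 g).
Proof.
  destruct hB as [_ [linB _]].
  destruct hrO2 as [addO _], hrC2 as [addC _].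
  assert (splitC : forall u v, B u v = (BC (rC1 u) (rC2 v) + BO (rO1 u) (rO2 v))%C).
  { intros u v. rewrite split. ring. }
  assert (glueO : forall F F', Tr2 F = Tr2 F' -> exists w, rO2 w = rO2 F /\ rC2 w = rC2 F').
  { intros F F' e. destruct (glue2 F F' e) as (w & hO & hC & _). eauto. }
  assert (glueC : forall F F', Tr2 F = Tr2 F' -> exists w, rC2 w = rC2 F /\ rO2 w = rO2 F').
  { intros F F' e. destruct (glue2 F' F (eq_sym e)) as (w & hO & hC & _). eauto. }
  split; [| split; [| split; [| split]]].
  - exact (Dlayer_lift_independent B lambda hlam infsup1 linB
             rO1 rO2 rC1 rC2 BO BC Tr2 addO split glueO).
  - exact (Dlayer_lift_independent B lambda hlam infsup1 linB
             rC1 rC2 rO1 rO2 BC BO Tr2 addC splitC glueC).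
  - intros F u. exact (Dlayer_norm_le B lambda hlam infsup1 linB
             rO1 rO2 rC1 rC2 BO BC Tr2 addO split glueO F u hBC).
  - intros F u. exact (Dlayer_norm_le B lambda hlam infsup1 linB
             rC1 rC2 rO1 rO2 BC BO Tr2 addC splitC glueC F u hBO).
  - exact (single_layer_norm_le B lambda hlam infsup1 Tr1).
Qed.
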